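(* Let $\mathcal{S}$ be a finite thick generalized quadrangle of order $(s,t)$ with a group $G$ of automorphisms acting regularly on the points. Then for each $g\in G$ with $g^2\ne 1$, \[|\mathcal{L}_2(g)|<(1+st)(2+\sqrt{s+t}),\] where $\mathcal{L}_2(g)$ is the set of lines $\ell$ such that $\ell^g$ and $\ell$ are distinct concurrent lines.
   Context: A generalized quadrangle of order $(s,t)$: each line has $s+1$ points, each point is on $t+1$ lines, and for each non-incident point-line pair $(P,\ell)$ there is a unique point on $\ell$ collinear with $P$; it is thick if $\min\{s,t\}\ge 2$. *)

From HB Require Import structures.
From mathcomp Require Import all_boot all_order all_algebra all_fingroup.
Set Implicit Arguments. Unset Strict Implicit. Unset Printing Implicit Defensive.

Section GQ.
Variables (P L : finType) (inc : P -> L -> bool).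

Definition collinear (p q : P) : bool := [exists m : L, inc p m && inc q m].
Definition concurrent (l m : L) : bool := [exists p : P, inc p l && inc p m].

Definition is_GQ (s t : nat) : Prop :=
  [/\ (forall p q : P, forall l m : L, p != q -> inc p l -> inc q l ->
          inc p m -> inc q m -> l = m),
      (forall l : L, #|[set p | inc p l]| = s.+1),
      (forall p : P, #|[set l | inc p l]| = t.+1) &
      (forall (p : P) (l : L), ~~ inc p l ->
          #|[set q | inc q l & collinear p q]| = 1)].

Definition thick_GQ (s t : nat) : Prop := is_GQ s t /\ 2 <= s /\ 2 <= t.

Definition acts_by_automorphisms (gT : finGroupType) (G : {group gT})
  (ap : {action gT &-> P}) (al : {action gT &-> L}) : Prop :=
  forall g, g \in G -> forall p l, inc (ap p g) (al l g) = inc p l.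

Definition regular_on_points (gT : finGroupType) (G : {group gT})
  (ap : {action gT &-> P}) : Prop :=
  (forall p q : P, exists2 g, g \in G & ap p g = q) /\
  (forall p : P, forall g, g \in G -> ap p g = p -> g = 1%g).

Definition L2 (gT : finGroupType) (al : {action gT &-> L}) (g : gT) : {set L} :=
  [set l : L | (al l g != l) && concurrent (al l g) l].
End GQ.

(* Let S be the set of points p that are the meet of some l in L2(g) with l^g.
   Such a p determines l (it is the line through p^(g^-1) and p) and l
   determines p, so |S| = |L2(g)|; and every l in L2(g) meets S in exactly
   the two points l^(g^-1) /\ l and l /\ l^g, since a third one would close a
   triangle.  In a GQ of order (s,t) the incidence matrix N satisfies
   N N^T N = (s+t) N + J, so |N^T z|^2 <= (s+t) |z|^2 whenever z is orthogonal
   to the all-one vector.  For z = 1_S - |S|/|P|, with |P| = (s+1)(1+st), the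
   lines of L2(g) alone contribute n (2 - n/(1+st))^2 to |N^T z|^2, where
   n = |L2(g)|, while (s+t)|z|^2 < (s+t) n; hence n/(1+st) < 2 + sqrt(s+t). *)

From HB Require Import structures.
From mathcomp Require Import all_boot all_order all_algebra all_fingroup.
From mathcomp Require Import zify ring lra.
Import Order.TTheory GRing.Theory Num.Theory.
Set Implicit Arguments. Unset Strict Implicit. Unset Printing Implicit Defensive.
Local Open Scope ring_scope.

Lemma sumr_indicator (R : pzSemiRingType) (T : finType) (A : {set T}) :
  \sum_x ((x \in A)%:R : R) = #|A|%:R.
Proof.
rewrite -sumr_const [RHS]big_mkcond /=.
by apply: eq_bigr => x _; case: (x \in A).
Qed.

Section Incidence.
Variables (P L : finType) (inc : P -> L -> bool) (s t : nat).

Lemma collinearC (p q : P) : collinear inc p q = collinear inc q p.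
Proof. by apply/existsP/existsP => -[m /andP[pm qm]]; exists m; rewrite pm qm. Qed.

Lemma sum_mul_line_sum (R : comPzSemiRingType) (w : L -> R) (z : P -> R) :
  \sum_m w m * \sum_(p | inc p m) z p = \sum_p z p * \sum_(m | inc p m) w m.
Proof.
under eq_bigr do rewrite mulr_sumr.
rewrite (exchange_big_dep predT) //=; apply: eq_bigr => p _.
by rewrite mulr_sumr; apply: eq_bigr => m _; rewrite mulrC.
Qed.

Hypothesis gq : is_GQ inc s t.

Lemma card_common_lines (p q : P) :
  #|[set m | inc p m & inc q m]| = if p == q then t.+1 else collinear inc p q.
Proof.
have [line_uniq _ lines_on_point _] := gq.
have [<-|pq] := eqVneq p q.
  by rewrite -(lines_on_point p); apply: eq_card => m; rewrite !inE andbb.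
have [/existsP[m0 /andP[pm0 qm0]]|ncol] := boolP (collinear inc p q).
  rewrite /= -(cards1 m0); apply: eq_card => m; rewrite !inE.
  by apply/andP/eqP => [[pm qm]|->]; [exact: line_uniq pq pm qm pm0 qm0|].
apply/eqP; rewrite cards_eq0; apply/eqP/setP => m; rewrite !inE.
by apply: contraNF ncol => pqm; apply/existsP; exists m.
Qed.

Lemma sum_card_common_lines (p : P) (l : L) :
  \sum_(q | inc q l) #|[set m | inc q m & inc p m]| = ((s + t) * inc p l + 1)%N.
Proof.
have [_ points_on_line _ unique_proj] := gq.
have [pl|npl] := boolP (inc p l).
  rewrite (bigD1 p) //= card_common_lines eqxx.
  have -> : (\sum_(q | inc q l && (q != p)) #|[set m | inc q m & inc p m]| = s)%N.
    have : (\sum_(q | inc q l) 1 = s.+1)%N by rewrite sum1dep_card points_on_line.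
    rewrite (bigD1 p) //= add1n => -[<-].
    apply: eq_bigr => q /andP[ql qp]; rewrite card_common_lines (negbTE qp).
    by apply/eqP; rewrite eqb1; apply/existsP; exists l; rewrite ql pl.
  by rewrite muln1; lia.
rewrite muln0 add0n -(unique_proj p l npl) -sum1dep_card big_mkcondr /=.
apply: eq_bigr => q ql; rewrite card_common_lines collinearC.
by have -> : (q == p) = false by apply: contraNF npl => /eqP <-.
Qed.

Lemma sum_points_lines_points (R : pzSemiRingType) (z : P -> R) (l : L) :
  \sum_(q | inc q l) \sum_(m | inc q m) \sum_(p | inc p m) z p
  = (s + t)%:R * \sum_(p | inc p l) z p + \sum_p z p.
Proof.
have inner q : \sum_(m | inc q m) \sum_(p | inc p m) z p
    = \sum_p z p *+ #|[set m | inc q m & inc p m]|.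
  rewrite (exchange_big_dep predT) //=; apply: eq_bigr => p _.
  by rewrite sumr_const cardsE.
under eq_bigr do rewrite inner.
rewrite exchange_big /=.
under eq_bigr do rewrite sumrMnr sum_card_common_lines addn1 mulrSr mulrnA.
rewrite big_split /= mulr_sumr; congr (_ + _).
by rewrite [RHS]big_mkcond; apply: eq_bigr => p _; rewrite mulrb mulr_natl.
Qed.

Lemma sumr_const_on_line (V : nmodType) (l : L) (x : V) :
  \sum_(p | inc p l) x = x *+ s.+1.
Proof.
have [_ points_on_line _ _] := gq.
by rewrite sumr_const -(points_on_line l); congr (_ *+ _); apply: eq_card => p; rewrite inE.
Qed.

Lemma sumr_const_on_point (V : nmodType) (p : P) (x : V) :
  \sum_(m | inc p m) x = x *+ t.+1.
Proof.
have [_ _ lines_on_point _] := gq.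
by rewrite sumr_const -(lines_on_point p); congr (_ *+ _); apply: eq_card => m; rewrite inE.
Qed.

Lemma card_points (l : L) : #|P| = (s.+1 * (1 + s * t))%N.
Proof.
have := sum_points_lines_points (fun=> 1%N) l.
under eq_bigr => q _ do under eq_bigr => m _ do rewrite sumr_const_on_line.
under eq_bigr => q _ do rewrite sumr_const_on_point.
rewrite !sumr_const_on_line sum1_card -!mulrnA !natn => count_flags.
(* restate with muln, which nia understands, in place of the ring product of nat *)
have : ((s + t) * s.+1 + #|P| = s.+1 * (t.+1 * s.+1))%N := esym count_flags.
nia.
Qed.

Lemma sum_line_sum_sqr_le (R : realDomainType) (z : P -> R) :
  (0 < s + t)%N -> \sum_p z p = 0 ->
  \sum_m (\sum_(p | inc p m) z p) ^+ 2 <= (s + t)%:R * \sum_p z p ^+ 2.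
Proof.
move=> st_gt0 sum_z0; set k : R := (s + t)%:R.
pose w m := \sum_(p | inc p m) z p.
pose u p := \sum_(m | inc p m) w m.
have sum_u_on_line m : \sum_(p | inc p m) u p = k * w m.
  by rewrite sum_points_lines_points sum_z0 addr0.
have w_norm : \sum_m w m ^+ 2 = \sum_p z p * u p.
  by rewrite -sum_mul_line_sum; apply: eq_bigr => m _; rewrite expr2.
have u_norm : \sum_p u p ^+ 2 = k * \sum_m w m ^+ 2.
  rewrite (eq_bigr (fun p => u p * u p)) => [|p _]; last by rewrite expr2.
  rewrite -sum_mul_line_sum mulr_sumr; apply: eq_bigr => m _.
  by rewrite sum_u_on_line expr2 mulrCA.
have : 0 <= \sum_p (u p - k * z p) ^+ 2 by apply: sumr_ge0 => p _; apply: sqr_ge0.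
have -> : \sum_p (u p - k * z p) ^+ 2
    = \sum_p u p ^+ 2 - k *+ 2 * \sum_p z p * u p + k ^+ 2 * \sum_p z p ^+ 2.
  rewrite !mulr_sumr -sumrB -big_split /=; apply: eq_bigr => p _; ring.
rewrite u_norm -w_norm.
have -> : k * \sum_m w m ^+ 2 - k *+ 2 * \sum_m w m ^+ 2 + k ^+ 2 * \sum_p z p ^+ 2
    = k * (k * \sum_p z p ^+ 2 - \sum_m w m ^+ 2) by ring.
by rewrite pmulr_rge0 ?subr_ge0 // ltr0n.
Qed.

Lemma two_secant_sqr_lt (R : realFieldType) (S : {set P}) (X : {set L}) :
  (0 < s + t)%N -> (0 < #|X|)%N -> #|S| = #|X| ->
  {in X, forall l, #|[set p in S | inc p l]| = 2} ->
  (2 - #|X|%:R / (1 + s * t)%:R) ^+ 2 < (s + t)%:R :> R.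
Proof.
move=> st_gt0 X_gt0 cardS secant; have /card_gt0P[l0 _] := X_gt0.
set n : R := #|X|%:R; set q : R := (1 + s * t)%:R; set k : R := (s + t)%:R.
have n_gt0 : 0 < n by rewrite ltr0n.
have q_gt0 : 0 < q by rewrite ltr0n.
have v_def : #|P|%:R = s.+1%:R * q :> R by rewrite (card_points l0) natrM.
pose c := n / #|P|%:R.
have cn_gt0 : 0 < c * n by rewrite !mulr_gt0 ?invr_gt0 // v_def mulr_gt0.
have sum_const (x : R) : \sum_(p : P) x = x * #|P|%:R.
  by rewrite sumr_const mulr_natr.
pose z p := (p \in S)%:R - c.
have sum_z0 : \sum_p z p = 0.
  by rewrite sumrB sumr_indicator cardS sum_const divfK ?subrr // v_def mulf_neq0 ?gt_eqF.
have norm_z : \sum_p z p ^+ 2 = n - c * n.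
  transitivity (\sum_p ((p \in S)%:R * (1 - 2 * c) + c ^+ 2)).
    by apply: eq_bigr => p _; rewrite /z; case: (p \in S) => /=; ring.
  rewrite big_split /= -mulr_suml sumr_indicator cardS sum_const -/n /c.
  field; rewrite v_def mulf_neq0 ?gt_eqF //.
have line_z l : l \in X -> \sum_(p | inc p l) z p = 2 - n / q.
  move=> lX; rewrite sumrB sumr_const_on_line.
  have -> : \sum_(p | inc p l) ((p \in S)%:R : R) = 2.
    transitivity (#|[set p in S | inc p l]|%:R : R); last by rewrite secant.
    rewrite -sumr_indicator big_mkcond /=.
    by apply: eq_bigr => p _; rewrite !inE andbC; case: (inc p l).
  rewrite /c v_def; congr (_ - _); rewrite -mulr_natr; field.
  by rewrite -natrM !nat1r !pnatr_eq0.
have lower : n * (2 - n / q) ^+ 2 <= \sum_m (\sum_(p | inc p m) z p) ^+ 2.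
  rewrite (bigID (mem X)) /= -[X in X <= _]addr0 lerD //; last first.
    by apply: sumr_ge0 => m _; apply: sqr_ge0.
  by rewrite (eq_bigr _ (fun m mX => congr1 (fun x => x ^+ 2) (line_z m mX)))
    sumr_const mulr_natl.
have : n * (2 - n / q) ^+ 2 < n * k.
  apply: (le_lt_trans (le_trans lower (sum_line_sum_sqr_le st_gt0 sum_z0))).
  by rewrite norm_z mulrC ltr_pM2r ?ltrBlDr ?ltrDl // ltr0n.
by rewrite ltr_pM2l.
Qed.
End Incidence.

Lemma ltr_add_sqrt (R : rcfType) (a x k : R) : (a - x) ^+ 2 < k -> x < a + Num.sqrt k.
Proof.
move=> lt_k; have k_gt0 : 0 < k := le_lt_trans (sqr_ge0 _) lt_k.
have [xa|ax] := lerP x a.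
  have : 0 < Num.sqrt k by rewrite sqrtr_gt0.
  lra.
have : Num.sqrt ((a - x) ^+ 2) < Num.sqrt k by rewrite ltr_sqrt.
by rewrite sqrtr_sqr ltr0_norm ?subr_lt0 //; lra.
Qed.

Lemma two_secant_bound (R : rcfType) (P L : finType) (inc : P -> L -> bool) (s t : nat)
    (S : {set P}) (X : {set L}) :
  is_GQ inc s t -> (0 < s + t)%N -> #|S| = #|X| ->
  {in X, forall l, #|[set p in S | inc p l]| = 2} ->
  #|X|%:R < (1 + s * t)%:R * (2 + Num.sqrt (s + t)%:R) :> R.
Proof.
move=> gq st_gt0 cardS secant.
have q_gt0 : 0 < (1 + s * t)%:R :> R by rewrite ltr0n.
have sqrt_ge0 := sqrtr_ge0 ((s + t)%:R : R).
have [->|X_gt0] := posnP #|X|; first by rewrite mulr_gt0 //; lra.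
have := ltr_add_sqrt (two_secant_sqr_lt gq R st_gt0 X_gt0 cardS secant).
by rewrite -(ltr_pM2l q_gt0) [_ * (_ / _)]mulrC divfK // gt_eqF.
Qed.

Lemma card_rel_dom_codom (A B : finType) (J : A -> B -> bool) :
    (forall a b b', J a b -> J a b' -> b = b') ->
    (forall a a' b, J a b -> J a' b -> a = a') ->
  #|[set a | [exists b, J a b]]| = #|[set b | [exists a, J a b]]|.
Proof.
move=> uniqB uniqA; pose E := [set x : A * B | J x.1 x.2].
have -> : [set a | [exists b, J a b]] = fst @: E.
  apply/setP => a; rewrite inE; apply/existsP/imsetP => [[b Jab]|[[a' b]]].
    by exists (a, b); rewrite ?inE.
  by rewrite inE /= => Jab ->; exists b.
have -> : [set b | [exists a, J a b]] = snd @: E.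
  apply/setP => b; rewrite inE; apply/existsP/imsetP => [[a Jab]|[[a b']]].
    by exists (a, b); rewrite ?inE.
  by rewrite inE /= => Jab ->; exists a.
rewrite !card_in_imset // => -[a b] [a' b'] /[!inE] /= Jab Jab' eq_ab.
  by move: Jab'; rewrite -eq_ab => /(uniqA _ _ _ Jab) ->.
by move: Jab'; rewrite -eq_ab => /(uniqB _ _ _ Jab) ->.
Qed.

Section FixedPointFreeAutomorphism.
Variables (P L : finType) (inc : P -> L -> bool) (s t : nat).
Variables (gT : finGroupType) (G : {group gT}).
Variables (ap : {action gT &-> P}) (al : {action gT &-> L}) (g : gT).
Hypotheses (gq : is_GQ inc s t) (aut : acts_by_automorphisms inc G ap al).
Hypotheses (gG : g \in G) (g_fpf : forall p, ap p g != p).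

Definition meets_L2 (p : P) (l : L) := [&& l \in L2 inc al g, inc p l & inc p (al l g)].

Definition L2_meets : {set P} := [set p | [exists l, meets_L2 p l]].

Lemma inc_actV (p : P) (l : L) : inc (ap p g^-1%g) l = inc p (al l g).
Proof. by rewrite -[in LHS](actK al g l) aut ?groupV. Qed.

Lemma actV_neq (p : P) : ap p g^-1%g != p.
Proof. by apply: contra (g_fpf p) => /eqP {1}<-; rewrite actKV. Qed.

Lemma L2_act_neq (l : L) : l \in L2 inc al g -> al l g != l.
Proof. by rewrite inE => /andP[]. Qed.

Lemma meets_L2_line_uniq (p : P) (l m : L) : meets_L2 p l -> meets_L2 p m -> l = m.
Proof.
have [line_uniq _ _ _] := gq.
move=> /and3P[_ pl plg] /and3P[_ pm pmg].
by apply: (line_uniq _ _ _ _ (actV_neq p)) => //; rewrite inc_actV.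
Qed.

Lemma meets_L2_point_uniq (p q : P) (l : L) : meets_L2 p l -> meets_L2 q l -> p = q.
Proof.
have [line_uniq _ _ _] := gq.
move=> /and3P[lL2 pl plg] /and3P[_ ql qlg]; apply/eqP.
by apply: contraNT (L2_act_neq lL2) => pq; apply/eqP/(line_uniq p q).
Qed.

Lemma L2_meets_exists (l : L) : l \in L2 inc al g -> exists p, meets_L2 p l.
Proof.
move=> lL2; have := lL2; rewrite inE => /andP[_ /existsP[p /andP[plg pl]]].
by exists p; rewrite /meets_L2 lL2 pl plg.
Qed.

Lemma card_L2_meets : #|L2_meets| = #|L2 inc al g|.
Proof.
rewrite (card_rel_dom_codom meets_L2_line_uniq meets_L2_point_uniq).
apply: eq_card => l; rewrite [in LHS]inE.
by apply/existsP/idP => [[p /and3P[]] //|/L2_meets_exists].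
Qed.

Lemma L2_meets_on_line (l : L) (p0 q : P) :
    l \in L2 inc al g -> meets_L2 p0 l -> q \in L2_meets -> inc q l ->
  q = p0 \/ q = ap p0 g^-1%g.
Proof.
have [line_uniq _ _ unique_proj] := gq.
have inc_act x n : inc (ap x g) (al n g) = inc x n := aut gG x n.
move=> lL2 /and3P[_ p0l p0lg] /[!inE] /existsP[m /and3P[_ qm qmg]] ql.
have [|qp0] := eqVneq q p0; [by left | right].
apply/eqP/negPn/negP => q_neq_r0.
have qg_p0 : ap q g != p0 by apply: contra q_neq_r0 => /eqP <-; rewrite actK.
have qg_l : ~~ inc (ap q g) l.
  apply: contra (L2_act_neq lL2) => qgl.
  by apply/eqP/(line_uniq (ap q g) p0) => //; rewrite inc_act.
have : [set p0; q] \subset [set x | inc x l & collinear inc (ap q g) x].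
  apply/subsetP => x; rewrite !inE => /orP[]/eqP->; rewrite ?p0l ?ql /=; apply/existsP.
    by exists (al l g); rewrite inc_act ql p0lg.
  by exists (al m g); rewrite inc_act qm qmg.
by move/subset_leq_card; rewrite unique_proj // cards2 eq_sym qp0.
Qed.

Lemma two_L2_meets_on_line (l : L) :
  l \in L2 inc al g -> #|[set p in L2_meets | inc p l]| = 2.
Proof.
move=> lL2; have [p0 meets_p0] := L2_meets_exists lL2.
have /and3P[_ p0l p0lg] := meets_p0.
have p0_meets : p0 \in L2_meets by rewrite inE; apply/existsP; exists l.
have r0_meets : ap p0 g^-1%g \in L2_meets.
  rewrite inE; apply/existsP; exists (al l g^-1%g).
  have r0l : inc (ap p0 g^-1%g) (al l g^-1%g) by rewrite aut ?groupV.
  rewrite /meets_L2 inE actKV r0l inc_actV p0lg !andbT; apply/andP; split.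
    by apply: contra (L2_act_neq lL2) => /eqP {1}->; rewrite actKV.
  by apply/existsP; exists (ap p0 g^-1%g); rewrite inc_actV p0lg.
have -> : [set p in L2_meets | inc p l] = [set p0; ap p0 g^-1%g].
  apply/setP => q; rewrite [LHS]inE !in_set2; apply/andP/orP => [[qS ql]|].
    by case: (L2_meets_on_line lL2 meets_p0 qS ql) => ->; [left | right].
  by case=> /eqP->; rewrite ?p0_meets ?r0_meets ?p0l ?inc_actV.
by rewrite cards2 eq_sym actV_neq.
Qed.
End FixedPointFreeAutomorphism.

Theorem theorem3p4 (P L : finType) (inc : P -> L -> bool) (s t : nat)
  (gT : finGroupType) (G : {group gT})
  (ap : {action gT &-> P}) (al : {action gT &-> L})
  (R : rcfType) :
  thick_GQ inc s t ->
  acts_by_automorphisms inc G ap al ->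
  regular_on_points G ap ->
  forall g, g \in G -> (g ^+ 2 != 1)%g ->
  ((#|L2 inc al g|)%:R < (1 + s * t)%:R * (2 + Num.sqrt (s + t)%:R) :> R)%R.
Proof.
move=> [gq [s_ge2 _]] aut [_ stab1] g gG g2_neq1.
have g_neq1 : g != 1%g by apply: contraNneq g2_neq1 => ->; rewrite expg1n.
have g_fpf p : ap p g != p by apply: contra g_neq1 => /eqP /(stab1 p g gG) ->.
apply: (two_secant_bound _ gq _ (card_L2_meets gq aut gG g_fpf)).
  by rewrite addn_gt0 (ltn_trans _ s_ge2).
exact: two_L2_meets_on_line gq aut gG g_fpf.
Qed.
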